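(* Let $F_1,\dots,F_n$ be groups and let $F=F_1\times\dots\times F_n$ act on a set $X$. Let $x\in X$, let $\mathrm{Stab}(x)$ be its stabilizer in $F$, let $S_i=F_i\cap\mathrm{Stab}(x)$, and let $N_i$ be the normalizer of $S_i$ in $F_i$. Then $\mathrm{Stab}(x)\subset N_1\times\dots\times N_n$. In particular, if no $S_i$ is normal in $F_i$, then $\#(F\cdot x)\geq 2^n$. *)

From mathcomp Require Import all_boot.
Set Implicit Arguments. Unset Strict Implicit. Unset Printing Implicit Defensive.

Record group := Group {
  gcar :> Type;
  gmul : gcar -> gcar -> gcar;
  gone : gcar;
  ginv : gcar -> gcar;
  gmulA : forall a b c, gmul a (gmul b c) = gmul (gmul a b) c;
  gmul1l : forall a, gmul gone a = a;
  gmul1r : forall a, gmul a gone = a;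
  gmulVl : forall a, gmul (ginv a) a = gone;
  gmulVr : forall a, gmul a (ginv a) = gone }.

Section Prod.
Variables (n : nat) (G : 'I_n -> group).

Definition prodG := forall i, G i.
Definition pmul (f g : prodG) : prodG := fun i => gmul (f i) (g i).
Definition pone : prodG := fun i => gone (G i).

Variable X : Type.

Definition is_action (act : prodG -> X -> X) : Prop :=
  (forall x, act pone x = x) /\
  (forall f g x, act f (act g x) = act (pmul f g) x).

Variable act : prodG -> X -> X.

Definition StabF (x : X) (f : prodG) : Prop := act f x = x.

Definition in_factor (i : 'I_n) (f : prodG) : Prop :=
  forall j, j <> i -> f j = gone (G j).

Definition S_ (x : X) (i : 'I_n) (g : G i) : Prop :=
  exists f : prodG, in_factor i f /\ f i = g /\ StabF x f.

Definition normalizer (H : group) (S : H -> Prop) (g : H) : Prop :=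
  forall s, S s <-> S (gmul (gmul g s) (ginv g)).

Definition normal_in (H : group) (S : H -> Prop) : Prop :=
  forall g : H, normalizer S g.

Definition orbitF (x y : X) : Prop := exists f : prodG, y = act f x.

End Prod.

From Stdlib Require Import FunctionalExtensionality ClassicalEpsilon.
From mathcomp Require Import all_boot.

Set Implicit Arguments.

(* Conjugating an element h of F_i ∩ Stab(x) by a stabilizer f gives an element of
   F_i ∩ Stab(x) whose i-th coordinate is f_i h_i f_i^-1; hence every f in Stab(x)
   has all its coordinates in the normalizers N_i.
   For the bound, pick g_i outside N_i and consider the 2^n points g_B x, where
   g_B has coordinates g_i for i in B and 1 elsewhere.  If g_A x = g_B x with
   i in A \ B, then g_B^-1 g_A stabilizes x and has i-th coordinate g_i,
   contradicting the first part. *)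

Lemma ginvK (H : group) (a : H) : ginv (ginv a) = a.
Proof. by rewrite -[RHS]gmul1l -(gmulVl (ginv a)) -gmulA gmulVl gmul1r. Qed.

Lemma ginv1 (H : group) : ginv (gone H) = gone H.
Proof. by rewrite -[LHS]gmul1l gmulVr. Qed.

Lemma dependent_choice (I : Type) (T : I -> Type) (P : forall i, T i -> Prop) :
  (forall i, exists t, P i t) -> exists f : forall i, T i, forall i, P i (f i).
Proof.
move=> hP; exists (fun i => proj1_sig (constructive_indefinite_description _ (hP i))).
by move=> i; exact: proj2_sig.
Qed.

Section ProductAction.
Variables (n : nat) (G : 'I_n -> group).

Definition pinv (f : prodG G) : prodG G := fun i => ginv (f i).

Lemma pmulVl (f : prodG G) : pmul (pinv f) f = pone G.
Proof. by apply: functional_extensionality_dep => i; exact: gmulVl. Qed.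

Lemma in_factor_conj (i : 'I_n) (f h : prodG G) :
  in_factor i h -> in_factor i (pmul (pmul f h) (pinv f)).
Proof. by move=> hi j ji; rewrite /pmul /pinv hi // gmul1r gmulVr. Qed.

Variables (X : Type) (act : prodG G -> X -> X) (x : X).
Hypothesis actP : is_action act.

Local Notation S i := (@S_ n G X act x i).

Lemma stabM f g : StabF act x f -> StabF act x g -> StabF act x (pmul f g).
Proof. by case: actP => _ actM; rewrite /StabF -actM => hf ->. Qed.

Lemma stabV f : StabF act x f -> StabF act x (pinv f).
Proof.
by case: actP => act1 actM; rewrite /StabF => hf; rewrite -{1}hf actM pmulVl act1.
Qed.

Lemma S_conj f i s : StabF act x f -> S i s ->
  S i (gmul (gmul (f i) s) (ginv (f i))).
Proof.
move=> hf [h [hi [<- hh]]].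
exists (pmul (pmul f h) (pinv f)); split; [exact: in_factor_conj | split=> //].
by apply: stabM; [exact: stabM | exact: stabV].
Qed.

Lemma stab_normalizer f : StabF act x f -> forall i, normalizer (S i) (f i).
Proof.
move=> hf i s; split; first exact: S_conj.
move=> /(S_conj (stabV hf)); rewrite /pinv ginvK.
by rewrite !gmulA gmulVl gmul1l -!gmulA gmulVl gmul1r.
Qed.

Lemma orbit_eq_normalizer f f' i : act f x = act f' x -> f' i = gone (G i) ->
  normalizer (S i) (f i).
Proof.
case: actP => act1 actM eqff' f'i.
have stab : StabF act x (pmul (pinv f') f).
  by rewrite /StabF -actM eqff' actM pmulVl act1.
by move: (stab_normalizer stab i); rewrite /pmul /pinv f'i ginv1 gmul1l.
Qed.

Definition select (g : prodG G) (B : {ffun 'I_n -> bool}) : prodG G :=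
  fun i => if B i then g i else gone (G i).

Lemma select_orbit_inj g : (forall i, ~ normalizer (S i) (g i)) ->
  injective (fun B => act (select g B) x).
Proof.
move=> gN A B eqAB; apply/ffunP => i.
case Ai: (A i); case Bi: (B i) => //; case: (gN i).
- by move: (orbit_eq_normalizer i eqAB); rewrite /select Ai Bi; apply.
- by move: (orbit_eq_normalizer i (esym eqAB)); rewrite /select Ai Bi; apply.
Qed.

End ProductAction.

Theorem mainTheorem17 (n : nat) (G : 'I_n -> group) (X : Type)
    (act : prodG G -> X -> X) (Hact : is_action act) (x : X) :
  (forall f : prodG G, @StabF n G X act x f ->
     forall i : 'I_n, normalizer (@S_ n G X act x i) (f i)) /\
  ((forall i : 'I_n, ~ normal_in (@S_ n G X act x i)) ->
     exists e : 'I_(2 ^ n) -> X,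
       injective e /\ forall k, @orbitF n G X act x (e k)).
Proof.
split=> [f|notnormal]; first exact: stab_normalizer.
have [g gN] : exists g : prodG G, forall i, ~ normalizer (@S_ n G X act x i) (g i).
  exact: dependent_choice (fun i => not_all_ex_not _ _ (notnormal i)).
have cardB : #|{: {ffun 'I_n -> bool}}| = 2 ^ n.
  by rewrite card_ffun card_bool card_ord.
pose B (k : 'I_(2 ^ n)) := enum_val (cast_ord (esym cardB) k).
exists (fun k => act (select g (B k)) x); split; last by move=> k; exists (select g (B k)).
move=> k k' /(select_orbit_inj Hact g gN) /enum_val_inj; exact: cast_ord_inj.
Qed.
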